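(* Let $L \in R[x][\partial]$ have order $r>0$ and let $T$ be a desingularized operator for $L$. Write $\mathrm{lc}_\partial(T) = a g$ with $a \in R$ and $g \in R[x]$ primitive. If $k \in \mathbb{N}$ is such that $T \in M_k(L)$, then $$\mathrm{cont}(L) = \big(R[x][\partial]\cdot M_k(L)\big) : a^{\infty}.$$
   Context: $R$ is a principal ideal domain with quotient field $Q_R$. $\sigma$ is an $R$-automorphism of $R[x]$ with $\sigma(x)=\gamma x+\tau$ ($\gamma,\tau\in R$, $\gamma$ a unit), and $\delta$ is an $R$-linear $\sigma$-derivation of $R[x]$ (i.e. $\delta(fg)=\sigma(f)\delta(g)+\delta(f)g$) with $\delta(x)\in R[x]$ of degree at most $1$. $R[x][\partial]$ is the Ore algebra of polynomials in $\partial$ over $R[x]$ with multiplication determined by $\partial p=\sigma(p)\partial+\delta(p)$ for $p\in R[x]$; $\sigma,\delta$ extend to $Q_R(x)$, giving the Ore algebra $Q_R(x)[\partial]\supseteq R[x][\partial]$. For nonzero $L=\ell_r\partial^r+\dots+\ell_0$ with $\ell_i\in R[x]$, $\ell_r\neq 0$, the order is $\deg_\partial L=r$ and the leading coefficient is $\mathrm{lc}_\partial(L)=\ell_r$. A polynomial in $R[x]$ is primitive if the gcd of its coefficients is $1$; every nonzero $f\in R[x]$ is $cg$ with $c\in R$ (its content) and $g$ primitive. The contraction ideal is $\mathrm{cont}(L)=Q_R(x)[\partial]L\cap R[x][\partial]$, and $M_k(L)=\{P\in\mathrm{cont}(L): \deg_\partial P\le k\}$ (including $0$). For a left ideal $I$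 of $R[x][\partial]$ and $a\in R$, $I:a^\infty=\{P\in R[x][\partial]: a^iP\in I \text{ for some } i\in\mathbb{N}\}$; $R[x][\partial]\cdot S$ denotes the left ideal generated by $S$. Removability: for $L$ of positive order and $p\in R[x]$ dividing $\mathrm{lc}_\partial(L)$, $p$ is removable from $L$ at order $k$ if there are $P\in Q_R(x)[\partial]$ of order $k$ and $w,v\in R[x]$ with $\gcd(p,w)=1$ in $R[x]$ such that $PL\in R[x][\partial]$ and $\sigma^{-k}(\mathrm{lc}_\partial(PL))=\frac{w}{vp}\mathrm{lc}_\partial(L)$; $p$ is removable if removable at some order $k\in\mathbb{N}$, and non-removable otherwise. Desingularized operator: let $L$ have order $r>0$ and $\mathrm{lc}_\partial(L)=c\,p_1^{e_1}\cdots p_m^{e_m}$ with $c\in R$ and $p_1,\dots,p_m\in R[x]\setminus R$ irreducible and pairwise coprime. An operator $T\in R[x][\partial]$ of order $k$ is a desingularized operator for $L$ if $T\in\mathrm{cont}(L)$ and $\sigma^{r-k}(\mathrm{lc}_\partial(T))=\frac{a}{b\,p_1^{k_1}\cdots p_m^{k_m}}\mathrm{lc}_\partial(L)$ for some $a,b\in R$, $b\ne0$, and nonnegative integers $k_i$ such that $p_i^{d_i}$ is non-removable from $L$ for every integer $d_i>k_i$, $i=1,\dots,m$. *)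

From HB Require Import structures.
From mathcomp Require Import all_boot all_order all_algebra.
Set Implicit Arguments. Unset Strict Implicit. Unset Printing Implicit Defensive.
Import Order.TTheory GRing.Theory Num.Theory.
Local Open Scope ring_scope.

Definition dvdR (R : idomainType) (a b : R) : Prop := exists c : R, b = c * a.

Definition is_ideal (R : idomainType) (I : R -> Prop) : Prop :=
  [/\ I 0, (forall x y, I x -> I y -> I (x + y)) & (forall r x, I x -> I (r * x))].

Definition PID (R : idomainType) : Prop :=
  forall I : R -> Prop, is_ideal I -> exists g : R, forall x, I x <-> dvdR g x.

Definition primitive (R : idomainType) (g : {poly R}) : Prop :=
  forall c : R, (forall i, dvdR c g`_i) -> c \is a GRing.unit.

Definition dvdRX (R : idomainType) (a b : {poly R}) : Prop :=
  exists c : {poly R}, b = c * a.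
Definition coprimeRX (R : idomainType) (p w : {poly R}) : Prop :=
  forall c : {poly R}, dvdRX c p -> dvdRX c w -> c \is a GRing.unit.
Definition irredRX (R : idomainType) (p : {poly R}) : Prop :=
  [/\ p != 0, p \isn't a GRing.unit &
      forall f g : {poly R}, p = f * g -> f \is a GRing.unit \/ g \is a GRing.unit].

Definition QRx (R : idomainType) := {fraction {poly R}}.
Definition toK (R : idomainType) (p : {poly R}) : QRx R :=
  @FracField.tofrac {poly R} p.
Definition cK (R : idomainType) (c : R) : QRx R := toK c%:P.

(* Operators are polynomials in d; an element of Q_R(x)[d] is a
   {poly QRx R} (list of coefficients), an element of R[x][d] is a
   {poly {poly R}}.  [embed] is the inclusion R[x][d] -> Q_R(x)[d]. *)
Definition embed (R : idomainType) (P : {poly {poly R}}) : {poly QRx R} :=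
  map_poly (@toK R) P.

Definition inRX (R : idomainType) (f : QRx R) : Prop :=
  exists p : {poly R}, f = toK p.
Definition inRXop (R : idomainType) (Q : {poly QRx R}) : Prop :=
  forall i, inRX Q`_i.

Section Ore.
Variables (R : idomainType) (sig del : QRx R -> QRx R).
(* d * (sum_j q_j d^j) = sum_j (sig(q_j) d^(j+1) + del(q_j) d^j) *)
Definition dshift (Q : {poly QRx R}) : {poly QRx R} :=
  map_poly sig Q * 'X + map_poly del Q.
(* Ore product: (sum_i p_i d^i) * Q = sum_i p_i (d^i Q) *)
Definition omul (P Q : {poly QRx R}) : {poly QRx R} :=
  \sum_(i < size P) P`_i *: iter i dshift Q.
End Ore.

(* standing hypotheses on sigma, delta (as maps on Q_R(x), i.e. the unique
   extensions of the given maps on R[x]) *)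
Definition ore_data (R : idomainType) (gam tau : R) (d : {poly R})
  (sig sigi del : QRx R -> QRx R) : Prop :=
  [/\ gam \is a GRing.unit,
      [/\ sig 1 = 1, (forall f g, sig (f + g) = sig f + sig g),
          (forall f g, sig (f * g) = sig f * sig g),
          cancel sig sigi & cancel sigi sig],
      (forall c : R, sig (cK c) = cK c),
      sig (toK 'X) = toK (gam *: 'X + tau%:P) &
      [/\ (forall f g, del (f + g) = del f + del g),
          (forall (c : R) f, del (cK c * f) = cK c * del f),
          (forall f g, del (f * g) = sig f * del g + del f * g),
          del (toK 'X) = toK d & (size d <= 2)%N]].

Section Contraction.
Variables (R : idomainType) (sig sigi del : QRx R -> QRx R).
Local Notation omul := (omul sig del).

(* cont(L) = Q_R(x)[d] L  cap  R[x][d] *)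
Definition cont (L P : {poly {poly R}}) : Prop :=
  exists Q : {poly QRx R}, embed P = omul Q (embed L).

Definition Mk (L : {poly {poly R}}) (k : nat) (P : {poly {poly R}}) : Prop :=
  cont L P /\ (size P <= k.+1)%N.

Definition lideal (S : {poly {poly R}} -> Prop) (P : {poly {poly R}}) : Prop :=
  exists n (A B : 'I_n -> {poly {poly R}}),
    (forall i, S (B i)) /\ embed P = \sum_(i < n) omul (embed (A i)) (embed (B i)).

Definition colon (I : {poly {poly R}} -> Prop) (a : R) (P : {poly {poly R}}) : Prop :=
  exists i : nat, I ((a ^+ i)%:P *: P).

(* sigma^z for an integer exponent z = r - k, given as (r, k) *)
Definition sig_pow (r k : nat) (f : QRx R) : QRx R :=
  if (k <= r)%N then iter (r - k) sig f else iter (k - r) sigi f.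

Definition removable_at (L : {poly {poly R}}) (p : {poly R}) (k : nat) : Prop :=
  exists P : {poly QRx R}, size P = k.+1 /\
  exists w v : {poly R}, [/\ v != 0, coprimeRX p w,
    inRXop (omul P (embed L)) &
    iter k sigi (lead_coef (omul P (embed L)))
      = toK w / (toK v * toK p) * toK (lead_coef L)].

Definition removable (L : {poly {poly R}}) (p : {poly R}) : Prop :=
  exists k : nat, removable_at L p k.

Definition desingularized (L T : {poly {poly R}}) : Prop :=
  let r := (size L).-1 in let k := (size T).-1 in
  [/\ T != 0, cont L T &
  exists (c : R) (m : nat) (p : 'I_m -> {poly R}) (e : 'I_m -> nat),
    [/\ lead_coef L = c%:P * \prod_(i < m) p i ^+ e i,
        (forall i, (1 < size (p i))%N /\ irredRX (p i)),
        (forall i, 0 < e i)%N,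
        (forall i j, i != j -> coprimeRX (p i) (p j)) &
    exists (a b : R) (ks : 'I_m -> nat),
      [/\ b != 0,
          sig_pow r k (toK (lead_coef T))
            = cK a / (cK b * toK (\prod_(i < m) p i ^+ ks i)) * toK (lead_coef L) &
          forall i (dd : nat), (ks i < dd)%N -> ~ removable L (p i ^+ dd)]]].
End Contraction.

From HB Require Import structures.
From mathcomp Require Import all_boot all_order all_algebra ring zify.
From Stdlib Require Import Classical.
Set Implicit Arguments. Unset Strict Implicit. Unset Printing Implicit Defensive.
Import GRing.Theory.
Local Open Scope ring_scope.

(* Write P in cont(L) as Q L.  Pulling lc(P) back by sigma^-(ord Q) gives a polynomial
   F = sigma^-(ord Q)(lc Q) lc(L).  Splitting off the p_i-parts of numerator and denominator
   of sigma^-(ord Q)(lc Q), non-removability of p_i^d for d > k_i bounds the p_i-part of the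
   denominator by k_i, so p_i^(e_i - k_i) divides F.  Clearing denominators in the relation
   defining a desingularized operator and applying Gauss's lemma over the principal ideal
   domain R then shows that the primitive polynomial sigma^(r - ord T)(g) divides F.  Hence
   lc(P) = H sigma^(ord P - ord T)(g), and a P - H d^(ord P - ord T) T lies in cont(L) and has
   smaller order: induction on the order puts a^i P in the left ideal generated by M_k(L).
   Conversely a is a unit of Q_R(x). *)

(** * Divisibility in R[x] over a principal ideal domain *)

Section Divisibility.
Variable R : idomainType.
Implicit Types (c x : R) (p q f h y : {poly R}).

Lemma dvdR0 c : dvdR c 0. Proof. by exists 0; rewrite mul0r. Qed.

Lemma dvdRD c x (y : R) : dvdR c x -> dvdR c y -> dvdR c (x + y).
Proof. by move=> [u ->] [v ->]; exists (u + v); rewrite mulrDl. Qed.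

Lemma dvdRN c x : dvdR c x -> dvdR c (- x).
Proof. by move=> [u ->]; exists (- u); rewrite mulNr. Qed.

Lemma dvdRMl c x (y : R) : dvdR c x -> dvdR c (y * x).
Proof. by move=> [u ->]; exists (y * u); rewrite mulrA. Qed.

Lemma dvdR_sum c I (r : seq I) (P : pred I) (F : I -> R) :
  (forall i, P i -> dvdR c (F i)) -> dvdR c (\sum_(i <- r | P i) F i).
Proof.
by move=> H; elim/big_rec: _ => [|i s Pi]; [exact: dvdR0 | exact: dvdRD (H i Pi)].
Qed.

Definition dvdC c p := forall i, dvdR c p`_i.

Lemma dvdC_polyC c p : dvdC c p -> exists p', p = c%:P * p'.
Proof.
move=> cp; have cpP i : exists u, p`_i == u * c by have [u ->] := cp i; exists u.
exists (\poly_(i < size p) xchoose (cpP i)); apply/polyP => i.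
rewrite coefCM coef_poly; case: ltnP => hi; last by rewrite mulr0 nth_default.
by rewrite mulrC; exact/eqP/(xchooseP (cpP i)).
Qed.

Lemma dvdRX_trans p q f : dvdRX p q -> dvdRX q f -> dvdRX p f.
Proof. by move=> [u ->] [v ->]; exists (v * u); rewrite mulrA. Qed.

Lemma dvdRX_refl p : dvdRX p p. Proof. by exists 1; rewrite mul1r. Qed.

Lemma unit_size1 p : p \is a GRing.unit -> size p = 1%N.
Proof. by rewrite poly_unitE => /andP[/eqP]. Qed.

Lemma not_dvdRX1 p : (1 < size p)%N -> ~ dvdRX p 1.
Proof.
move=> sp [c ec]; have : p \is a GRing.unit by apply/unitrPr; exists c; rewrite mulrC.
by move/unit_size1; lia.
Qed.

Lemma irred_primitive p : (1 < size p)%N -> irredRX p -> primitive p.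
Proof.
move=> sp [_ _ irr] c /dvdC_polyC [p' ep]; case: (irr _ _ ep) => [|p'U].
  by rewrite poly_unitE coefC eqxx size_polyC => /andP[].
by move: sp; rewrite ep mul_polyC => /leq_trans/(_ (size_scale_leq c p')); rewrite (unit_size1 p'U).
Qed.

Section PID.
Hypothesis R_PID : PID R.

Definition coef_ideal p x := exists u : {poly R}, x = \sum_(i < size p) u`_i * p`_i.

Lemma coef_ideal_is_ideal p : is_ideal (coef_ideal p).
Proof.
split.
- by exists 0; rewrite big1 // => i _; rewrite coef0 mul0r.
- move=> x y [u ->] [v ->]; exists (u + v); rewrite -big_split.
  by apply: eq_bigr => i _; rewrite coefD mulrDl.
- move=> r x [u ->]; exists (r%:P * u); rewrite mulr_sumr.
  by apply: eq_bigr => i _; rewrite coefCM mulrA.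
Qed.

Lemma coef_ideal_coef p i : coef_ideal p p`_i.
Proof.
case: (ltnP i (size p)) => hi; last by exists 0; rewrite nth_default // big1 // => j _; rewrite coef0 mul0r.
exists 'X^i; rewrite (bigD1 (Ordinal hi)) //= coefXn eqxx mul1r big1 ?addr0 // => j.
by rewrite coefXn -val_eqE /= => /negPf ->; rewrite mul0r.
Qed.

Lemma coef_ideal_dvdR p c x : dvdC c p -> coef_ideal p x -> dvdR c x.
Proof. by move=> cp [u ->]; apply: dvdR_sum => i _; exact: dvdRMl. Qed.

Lemma primitive_coef_ideal1 p : primitive p -> coef_ideal p 1.
Proof.
move=> pp; have [g0 Hg] := R_PID (coef_ideal_is_ideal p).
have g0U : g0 \is a GRing.unit by apply: pp => i; apply/Hg/coef_ideal_coef.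
by apply/Hg; exists g0^-1; rewrite mulVr.
Qed.

Lemma content_decomposition p : p != 0 ->
  exists c p', [/\ c != 0, p = c%:P * p' & primitive p'].
Proof.
move=> p0; have [g0 Hg] := R_PID (coef_ideal_is_ideal p).
have g0p : dvdC g0 p by move=> i; apply/Hg/coef_ideal_coef.
have [p' ep] := dvdC_polyC g0p.
have g00 : g0 != 0 by apply: contraNneq p0 => g00; rewrite ep g00 polyC0 mul0r.
exists g0, p'; split => // c cp'.
have [e he] : dvdR (g0 * c) g0.
  apply: (coef_ideal_dvdR (p := p)); last by apply/Hg; exists 1; rewrite mul1r.
  by move=> i; rewrite ep coefCM; have [u ->] := cp' i; exists u; rewrite mulrCA.
by apply/unitrPr; exists e; apply: (mulfI g00); rewrite mulr1 {2}he; ring.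
Qed.

Lemma dvdR_coefM_step G h lam i s :
  (forall j, (s < j)%N -> dvdR lam h`_j) -> dvdC lam (G * h) ->
  (forall j, (i < j)%N -> dvdC lam (G`_j *: h)) -> dvdR lam (G`_i * h`_s).
Proof.
move=> hs Ghl hj; have := Ghl (i + s)%N.
have ilt : (i < (i + s).+1)%N by rewrite ltnS leq_addr.
rewrite coefM (bigD1 (Ordinal ilt)) //= addKn.
set rest := (X in _ + X) => Ghl_is; rewrite -(addrK rest (G`_i * h`_s)).
apply: dvdRD Ghl_is _; apply/dvdRN/dvdR_sum => j; rewrite -val_eqE /= => ji.
case: (ltngtP j i) ji => // [ji | ij] _; first by apply/dvdRMl/hs; lia.
by have := hj _ ij (i + s - j)%N; rewrite coefZ.
Qed.

(* Descending induction on i: once lam divides every G_j h with j > i, the coefficient of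
   index i + s of G h shows that lam divides G_i h_s.  As the coefficients of G generate R,
   lam then divides h. *)
Lemma dvdC_mul_primitive G h lam : primitive G -> dvdC lam (G * h) -> dvdC lam h.
Proof.
move=> pG; have [u hu] := primitive_coef_ideal1 pG.
suff main s h' : (forall j, (s <= j)%N -> dvdR lam h'`_j) -> dvdC lam (G * h') -> dvdC lam h'.
  by apply: (main (size h)) => j hj; rewrite nth_default //; exact: dvdR0.
elim: s h' => [|s IH] h' hs Ghl; first by move=> j; exact: hs.
have GiC t i : (size G <= i + t)%N -> dvdC lam (G`_i *: h').
  elim: t i => [|t IHt] i hi.
    by rewrite addn0 in hi; rewrite nth_default // scale0r => j; rewrite coef0; exact: dvdR0.
  have hj j : (i < j)%N -> dvdC lam (G`_j *: h') by move=> ij; apply: IHt; lia.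
  have Gihs := dvdR_coefM_step hs Ghl hj.
  apply: IH => [j sj | j]; last by rewrite -scalerAr coefZ; exact: dvdRMl.
  by rewrite coefZ; case: (eqVneq j s) => [-> // | ne]; apply/dvdRMl/hs; lia.
move=> m; rewrite -[h'`_m]mul1r hu mulr_suml; apply: dvdR_sum => i _.
by rewrite -mulrA; apply: dvdRMl; have := GiC (size G) i (leq_addl i (size G)) m; rewrite coefZ.
Qed.

Lemma primitive_dvdRX G lam f h : primitive G -> lam != 0 -> lam%:P * f = h * G -> dvdRX G f.
Proof.
move=> pG lam0 e.
have : dvdC lam (G * h) by move=> i; rewrite mulrC -e coefCM; exists f`_i; rewrite mulrC.
move/(dvdC_mul_primitive pG)/dvdC_polyC => [h' eh]; exists h'.
by apply: (mulfI (_ : lam%:P != 0)); rewrite ?polyC_eq0 // e eh mulrA.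
Qed.

Lemma ideal_pseudo_generator (M : {poly R} -> Prop) m0 : is_ideal M -> M m0 -> m0 != 0 ->
  exists2 m, m != 0 /\ M m & forall y, M y -> exists k q, (lead_coef m ^+ k)%:P * y = q * m.
Proof.
move=> [_ MD MM]; move: {2}(size m0) (leqnn (size m0)) => s.
elim: s m0 => [|s IH] m; first by rewrite leqn0 size_poly_eq0 => /eqP ->; rewrite eqxx.
move=> sm Mm m0; case: (classic (exists y, M y /\ y %% m != 0)) => [[y [My r0]] | none].
  apply: (IH (y %% m)) => //.
    by rewrite -ltnS (leq_trans _ sm) // Pdiv.Idomain.ltn_modp.
  have -> : y %% m = (lead_coef m ^+ scalp y m)%:P * y + (- (y %/ m)) * m.
    by rewrite mul_polyC Pdiv.Idomain.divp_eq mulNr addrC addKr.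
  by apply: MD; apply: MM.
exists m => // y My; exists (scalp y m), (y %/ m).
have r0 : y %% m = 0 by apply/eqP/negPn/negP => r0; apply: none; exists y.
by rewrite mul_polyC Pdiv.Idomain.divp_eq r0 addr0.
Qed.

Definition primeRX p := forall f g, dvdRX p (f * g) -> dvdRX p f \/ dvdRX p g.

Lemma irred_coprime_const p f : (1 < size p)%N -> irredRX p -> ~ dvdRX p f ->
  exists lam u v, lam != 0 /\ lam%:P = u * p + v * f.
Proof.
move=> sp [p0 _ irr] pNf; pose M y := exists u v, y = u * p + v * f.
have M_ideal : is_ideal M.
  split; first by exists 0, 0; rewrite !mul0r addr0.
    by move=> _ _ [u [v ->]] [u' [v' ->]]; exists (u + u'), (v + v'); ring.
  by move=> r _ [u [v ->]]; exists (r * u), (r * v); ring.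
have f0 : f != 0 by apply: contra_notN pNf => /eqP ->; exists 0; rewrite mul0r.
have Mf : M f by exists 0, 1; rewrite mul0r mul1r add0r.
have Mp : M p by exists 1, 0; rewrite mul1r mul0r addr0.
have [m [m0 Mm] mdiv] := ideal_pseudo_generator M_ideal Mf f0.
have [c [m' [c0 em pm']]] := content_decomposition m0.
have m'_dvd y : M y -> dvdRX m' y.
  move=> /mdiv [k [q e]]; have lck0 : lead_coef m ^+ k != 0 by rewrite expf_neq0 ?lead_coef_eq0.
  by apply: (primitive_dvdRX pm' lck0 (h := q * c%:P)); rewrite e em mulrA.
have [e ep] := m'_dvd p Mp; case: (irr _ _ ep) => [eU | m'U].
  by case: pNf; apply: dvdRX_trans (m'_dvd f Mf); exists e^-1; rewrite ep mulrA mulVr ?mul1r.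
have em2 : m = (c * m'`_0)%:P by rewrite em {1}(size1_polyC (eq_leq (unit_size1 m'U))) polyCM.
have [u [v em_uv]] := Mm; exists (c * m'`_0), u, v; split; last by rewrite -em2.
by apply: contraNneq m0 => ce; rewrite em2 ce polyC0.
Qed.

Lemma irred_prime p : (1 < size p)%N -> irredRX p -> primeRX p.
Proof.
move=> sp irr f g [w ew]; case: (classic (dvdRX p f)) => [|pNf]; [by left | right].
have [lam [u [v [lam0 e]]]] := irred_coprime_const sp irr pNf.
apply: (primitive_dvdRX (irred_primitive sp irr) lam0 (h := u * g + v * w)).
rewrite e; have -> : (u * p + v * f) * g = u * g * p + v * (f * g) by ring.
by rewrite ew; ring.
Qed.

End PID.

Lemma factor_max_pow p h : (1 < size p)%N -> h != 0 ->
  exists n h', h = p ^+ n * h' /\ ~ dvdRX p h'.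
Proof.
move=> sp; have p0 : p != 0 by rewrite -size_poly_gt0 ltnW.
move: {2}(size h) (leqnn (size h)) => s; elim: s h => [|s IH] h sh h0.
  by move: sh; rewrite leqn0 size_poly_eq0 (negPf h0).
case: (classic (dvdRX p h)) => [[c ec] | pNh]; last by exists 0%N, h; rewrite expr0 mul1r.
have c0 : c != 0 by apply: contraNneq h0 => c0; rewrite ec c0 mul0r.
have sc : (size c <= s)%N by move: sh; rewrite ec size_mul //; lia.
have [n [h' [ec' pNh']]] := IH c sc c0.
by exists n.+1, h'; split => //; rewrite ec ec' exprS; ring.
Qed.

Lemma dvdRX_exp2l p m n : (m <= n)%N -> dvdRX (p ^+ m) (p ^+ n).
Proof. by move=> mn; exists (p ^+ (n - m)); rewrite -exprD subnK. Qed.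

Lemma prod_pow_cancel m (P : 'I_m -> {poly R}) (E F : 'I_m -> nat) A B :
  (forall i, P i != 0) ->
  A * \prod_(i < m) P i ^+ F i = B * \prod_(i < m) P i ^+ E i ->
  A * \prod_(i < m) P i ^+ (F i - E i) = B * \prod_(i < m) P i ^+ (E i - F i).
Proof.
move=> P0 eAB; pose Pmin := \prod_(i < m) P i ^+ minn (E i) (F i).
have split_min (G H : 'I_m -> nat) : (forall i, minn (E i) (F i) + (G i - H i) = G i)%N ->
    \prod_(i < m) P i ^+ G i = Pmin * \prod_(i < m) P i ^+ (G i - H i).
  by move=> GH; rewrite /Pmin -big_split; apply: eq_bigr => i _ /=; rewrite -exprD GH.
have Pmin0 : Pmin != 0 by apply/prodf_neq0 => i _; exact: expf_neq0.
apply: (mulfI Pmin0); rewrite mulrCA -split_min; last by move=> i; lia.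
by rewrite mulrCA -split_min ?eAB // => i; lia.
Qed.

Section Prime.
Variable p : {poly R}.
Hypotheses (p_prime : primeRX p) (p_size : (1 < size p)%N).

Let p0 : p != 0. Proof. by rewrite -size_poly_gt0 ltnW. Qed.

Lemma prime_pow_dvd_mulr n f y : ~ dvdRX p y -> dvdRX (p ^+ n) (f * y) -> dvdRX (p ^+ n) f.
Proof.
move=> pNy; elim: n f => [|n IH] f pn; first by exists f; rewrite expr0 mulr1.
have [f1 ef] : dvdRX (p ^+ n) f.
  by apply: IH; case: pn => t et; exists (t * p); rewrite et exprSr; ring.
have [t et] := pn; have e : f1 * y = t * p.
  by apply: (mulIf (expf_neq0 n p0)); rewrite mulrAC -ef et exprSr; ring.
case: (@p_prime f1 y) => [|[f2 ef2]|//]; first by exists t.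
by exists f2; rewrite ef ef2 exprSr; ring.
Qed.

Lemma dvd_prime_pow (c : {poly R}) n : dvdRX c (p ^+ n) -> c \is a GRing.unit \/ dvdRX p c.
Proof.
elim: n c => [|n IH] c [e he].
  by left; apply/unitrPr; exists e; rewrite mulrC -he expr0.
case: (@p_prime e c); [by exists (p ^+ n); rewrite -he exprSr | | by right].
by case=> e' ee; apply: IH; exists e'; apply: (mulIf p0); rewrite -exprSr he ee; ring.
Qed.

Lemma coprime_prime_pow n f : ~ dvdRX p f -> coprimeRX (p ^+ n) f.
Proof.
move=> pNf c cpn cf; case: (dvd_prime_pow cpn) => // pc.
by case: pNf; exact: dvdRX_trans pc cf.
Qed.

Lemma prime_coprime_Ndvd_pow q n : coprimeRX p q -> ~ dvdRX p (q ^+ n).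
Proof.
move=> cpq; elim: n => [|n IH]; first by rewrite expr0; exact: not_dvdRX1.
rewrite exprS => /p_prime [pq | //].
by have := unit_size1 (cpq p (dvdRX_refl p) pq); lia.
Qed.

Lemma prime_pow_dvd_cancel al be e t F D' N' Y : ~ dvdRX p D' -> (al - be <= t)%N ->
  F * (p ^+ al * D') = p ^+ be * N' * (p ^+ e * Y) -> dvdRX (p ^+ (e - t)) F.
Proof.
move=> pND' albe eF.
suff /(prime_pow_dvd_mulr pND') : dvdRX (p ^+ (e - (al - be))) (F * D').
  by apply: dvdRX_trans; apply: dvdRX_exp2l; lia.
have [eal | ale] := leqP e (al - be).
  by exists (F * D'); rewrite (_ : e - (al - be) = 0)%N ?expr0 ?mulr1 //; lia.
exists (N' * Y * p ^+ (be - al)); apply: (mulfI (expf_neq0 al p0)).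
rewrite mulrCA eF (_ : p ^+ be * N' * (p ^+ e * Y) = N' * Y * p ^+ (be + e)).
  by rewrite (_ : (be + e = al + (be - al) + (e - (al - be)))%N) ?exprD; [ring | lia].
by rewrite exprD; ring.
Qed.

End Prime.

Lemma dvd_prod_coprime_pows m (P : 'I_m -> {poly R}) (E : 'I_m -> nat) f :
  (forall i, primeRX (P i)) -> (forall i, (1 < size (P i))%N) ->
  (forall i j, i != j -> coprimeRX (P i) (P j)) ->
  (forall i, dvdRX (P i ^+ E i) f) -> dvdRX (\prod_(i < m) P i ^+ E i) f.
Proof.
move=> Pprime Psize Pcop Pf.
have PNprod j s : j \notin s -> ~ dvdRX (P j) (\prod_(i <- s) P i ^+ E i).
  elim: s => [|i s IH]; first by rewrite big_nil => _; exact: not_dvdRX1.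
  rewrite inE negb_or big_cons => /andP[ji js] /Pprime [|]; last exact: IH.
  exact: (prime_coprime_Ndvd_pow (Pprime j) (Psize j) (Pcop _ _ ji)).
suff : forall s : seq 'I_m, uniq s -> dvdRX (\prod_(i <- s) P i ^+ E i) f.
  by apply; exact: index_enum_uniq.
elim=> [|j s IH]; first by rewrite big_nil => _; exists f; rewrite mulr1.
move=> /= /andP[js us]; have [h eh] := IH us.
have [h' eh'] : dvdRX (P j ^+ E j) h.
  by apply: (prime_pow_dvd_mulr (Pprime j) (Psize j) (PNprod _ _ js)); rewrite -eh.
by exists h'; rewrite big_cons eh eh' mulrA.
Qed.

End Divisibility.

(** * The Ore product on Q_R(x)[d] *)

Section AdditiveMaps.
Variables (V W : zmodType) (phi : V -> W).
Hypothesis phiD : {morph phi : x y / x + y}.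

Lemma addmorph0 : phi 0 = 0.
Proof. by apply: (addrI (phi 0)); rewrite -phiD !addr0. Qed.

Lemma addmorphN x : phi (- x) = - phi x.
Proof. by apply: (addrI (phi x)); rewrite -phiD !subrr addmorph0. Qed.

End AdditiveMaps.

Definition ore_maps (R : idomainType) (sig del : QRx R -> QRx R) : Prop :=
  [/\ {morph sig : f g / f + g}, {morph sig : f g / f * g}, sig 1 = 1, injective sig &
      {morph del : f g / f + g} /\ (forall f g, del (f * g) = sig f * del g + del f * g)].

Section OreProduct.
Variables (R : idomainType) (sig del : QRx R -> QRx R).
Hypothesis ore : ore_maps sig del.
Local Notation K := (QRx R).
Local Notation D := (dshift sig del).
Local Notation om := (omul sig del).
Implicit Types (Q Y Z : {poly K}) (c : K).

Let sigD : {morph sig : f g / f + g}. Proof. by case: ore. Qed.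
Let sigM : {morph sig : f g / f * g}. Proof. by case: ore. Qed.
Let sig1 : sig 1 = 1. Proof. by case: ore. Qed.
Let sig_inj : injective sig. Proof. by case: ore. Qed.
Let delD : {morph del : f g / f + g}. Proof. by case: ore => _ _ _ _ []. Qed.
Let delM f g : del (f * g) = sig f * del g + del f * g. Proof. by case: ore => _ _ _ _ []. Qed.

Let sig0 : sig 0 = 0. Proof. exact: addmorph0. Qed.
Let del0 : del 0 = 0. Proof. exact: addmorph0. Qed.

Lemma del1 : del 1 = 0.
Proof.
have := delM 1 1; rewrite sig1 !mul1r mulr1 => del11.
by apply: (addrI (del 1)); rewrite addr0 -del11.
Qed.

Lemma coef_dshift j Y : (D Y)`_j = (if j == 0%N then 0 else sig Y`_j.-1) + del Y`_j.
Proof.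
rewrite /dshift coefD coefMX (coef_map_id0 _ _ del0); case: (j == 0%N) => //.
by rewrite coef_map_id0 ?sig0.
Qed.

Lemma dshiftD Y Z : D (Y + Z) = D Y + D Z.
Proof.
by apply/polyP => j; rewrite coefD !coef_dshift !coefD delD; case: (j == 0%N); rewrite ?sigD; ring.
Qed.

Lemma dshift0 : D 0 = 0.
Proof.
by apply/polyP => j; rewrite coef_dshift !coef0 sig0 del0; case: (j == 0%N); rewrite ?addr0.
Qed.

Lemma dshiftZ c Y : D (c *: Y) = sig c *: D Y + del c *: Y.
Proof.
apply/polyP => j; rewrite coef_dshift coefD (coefZ (sig c)) (coefZ (del c)) coef_dshift !(coefZ c) delM.
by case: (j == 0%N); rewrite ?sigM; ring.
Qed.

Lemma dshift1 : D 1 = 'X.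
Proof.
apply/polyP => -[|[|j]]; rewrite coef_dshift coefX !coef1 /=.
- by rewrite del1 addr0.
- by rewrite sig1 del0 addr0.
- by rewrite sig0 del0 addr0.
Qed.

Lemma dshiftMX Y : D (Y * 'X) = D Y * 'X.
Proof.
apply/polyP => j; rewrite coefMX !coef_dshift !coefMX.
by case: j => [|[|j]] /=; rewrite ?del0 ?addr0 ?sig0 ?add0r.
Qed.

Lemma size_dshift Y : Y != 0 ->
  size (D Y) = (size Y).+1 /\ lead_coef (D Y) = sig (lead_coef Y).
Proof.
move=> Y0; have sY := size_map_inj_poly sig_inj sig0 Y.
have sigY0 : map_poly sig Y != 0 by rewrite -size_poly_eq0 sY size_poly_eq0.
have Yd : (size (map_poly del Y) < size (map_poly sig Y * 'X)%R)%N.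
  by rewrite size_mulX // sY ltnS map_polyE (leq_trans (size_Poly _)) ?size_map.
by rewrite /dshift size_polyDl // lead_coefDl // size_mulX // sY lead_coefMX lead_coef_map_inj ?sig0.
Qed.

Lemma omulE Q Y N : (size Q <= N)%N -> om Q Y = \sum_(i < N) Q`_i *: iter i D Y.
Proof.
move=> QN; rewrite /omul (big_ord_widen N (fun i => Q`_i *: iter i D Y)) //.
by rewrite big_mkcond; apply: eq_bigr => i _; case: ltnP => // ?; rewrite nth_default ?scale0r.
Qed.

Lemma omul0 Y : om 0 Y = 0.
Proof. by rewrite /omul size_poly0 big_ord0. Qed.

Lemma omulD Q1 Q2 Y : om (Q1 + Q2) Y = om Q1 Y + om Q2 Y.
Proof.
set N := maxn (size Q1) (size Q2).
rewrite !(omulE _ (N := N)) ?leq_maxl ?leq_maxr ?(leq_trans (size_polyD _ _)) //.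
by rewrite -big_split; apply: eq_bigr => i _; rewrite coefD scalerDl.
Qed.

Lemma omulZ c Q Y : om (c *: Q) Y = c *: om Q Y.
Proof.
rewrite !(omulE _ (N := size Q)) ?size_scale_leq // scaler_sumr.
by apply: eq_bigr => i _; rewrite coefZ scalerA.
Qed.

Lemma omulB Q1 Q2 Y : om (Q1 - Q2) Y = om Q1 Y - om Q2 Y.
Proof. by rewrite omulD -scaleN1r omulZ scaleN1r. Qed.

Lemma omulC c Y : om c%:P Y = c *: Y.
Proof. by rewrite (omulE _ (N := 1)) ?size_polyC ?leq_b1 // big_ord1 coefC. Qed.

Lemma omul1 Y : om 1 Y = Y.
Proof. by rewrite -polyC1 omulC scale1r. Qed.

Lemma omulXn j Y : om 'X^j Y = iter j D Y.
Proof.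
rewrite (omulE _ (N := j.+1)) ?size_polyXn // big_ord_recr /= coefXn eqxx scale1r.
by rewrite big1 ?add0r // => i _; rewrite coefXn ltn_eqF ?scale0r.
Qed.

Lemma omulMX Q Y : om (Q * 'X) Y = om Q (D Y).
Proof.
have QX : (size (Q * 'X)%R <= (size Q).+1)%N.
  by apply/leq_sizeP => -[|j] Qj; rewrite coefMX //= nth_default.
rewrite (omulE Y QX) (omulE (D Y) (leqnn _)) big_ord_recl /= coefMX eqxx scale0r add0r.
by apply: eq_bigr => i _; rewrite coefMX /= -iterSr.
Qed.

Lemma omul_MXaddC Q c Y : om (Q * 'X + c%:P) Y = om Q (D Y) + c *: Y.
Proof. by rewrite omulD omulMX omulC. Qed.

Lemma dshift_omul Q Y : D (om Q Y) = om (D Q) Y.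
Proof.
elim/poly_ind: Q Y => [|Q c IH] Y; first by rewrite omul0 dshift0 omul0.
rewrite omul_MXaddC dshiftD IH dshiftZ dshiftD dshiftMX omulD omulMX; congr (_ + _).
by rewrite -alg_polyC dshiftZ dshift1 omulD !omulZ omul1 (omulXn 1).
Qed.

Lemma omulA Q Y Z : om Q (om Y Z) = om (om Q Y) Z.
Proof.
elim/poly_ind: Q Y => [|Q c IH] Y; first by rewrite !omul0.
by rewrite !omul_MXaddC dshift_omul IH omulD omulZ.
Qed.

Lemma size_omul Q Y : Q != 0 -> Y != 0 ->
  size (om Q Y) = (size Q + size Y).-1 /\
  lead_coef (om Q Y) = lead_coef Q * iter (size Q).-1 sig (lead_coef Y).
Proof.
elim/poly_ind: Q Y => [|Q c IH] Y; first by rewrite eqxx.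
move=> QXc0 Y0; rewrite omul_MXaddC; have [Q0 | Q0] := eqVneq Q 0.
  rewrite Q0 mul0r add0r in QXc0 *; rewrite omul0 add0r polyC_eq0 in QXc0 *.
  by rewrite size_scale // lead_coefZ size_polyC lead_coefC QXc0.
have [sDY lDY] := size_dshift Y0; have DY0 : D Y != 0 by rewrite -size_poly_eq0 sDY.
have [sQ lQ] := IH _ Q0 DY0.
have sQX : size (Q * 'X + c%:P) = (size Q).+1 by rewrite size_MXaddC (negPf Q0).
have sQ0 : (0 < size Q)%N by rewrite size_poly_gt0.
have lt : (size (c *: Y) < size (om Q (D Y)))%N.
  by rewrite sQ sDY (leq_ltn_trans (size_scale_leq _ _)) //; lia.
have lQX : lead_coef (Q * 'X + c%:P) = lead_coef Q.
  by rewrite lead_coefDl ?lead_coefMX // size_mulX // size_polyC ltnS (leq_trans (leq_b1 _)).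
rewrite size_polyDl // lead_coefDl // sQ lQ sDY lDY sQX lQX -iterSr prednK //.
by split => //; lia.
Qed.

End OreProduct.

(** * R[x][d] inside Q_R(x)[d] *)

Section Embedding.
Variable R : idomainType.
Local Notation K := (QRx R).
Implicit Types (p q : {poly R}) (P : {poly {poly R}}).

Lemma toK0 : toK 0 = 0 :> K. Proof. exact: tofrac0. Qed.
Lemma toK1 : toK 1 = 1 :> K. Proof. exact: tofrac1. Qed.
Lemma toKD : {morph @toK R : p q / p + q}. Proof. exact: tofracD. Qed.
Lemma toKB : {morph @toK R : p q / p - q}. Proof. exact: tofracB. Qed.
Lemma toKM : {morph @toK R : p q / p * q}. Proof. exact: tofracM. Qed.
Lemma toKXn n : {morph @toK R : p / p ^+ n}. Proof. exact: tofracXn. Qed.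

Lemma toK_inj : injective (@toK R).
Proof. by move=> p q /eqP; rewrite /toK tofrac_eq => /eqP. Qed.

Lemma toK_eq0 p : (toK p == 0) = (p == 0).
Proof. exact: tofrac_eq0. Qed.

Lemma cK_eq0 (c : R) : (cK c == 0) = (c == 0).
Proof. by rewrite toK_eq0 polyC_eq0. Qed.

Lemma toK_fracE (x : K) : exists n d, d != 0 /\ x = toK n / toK d.
Proof.
elim/quotW: x => r; have dr0 := denom_ratioP r; exists r.1, r.2; split => //.
rewrite /toK; unlock FracField.tofrac; rewrite !piE; apply/eqmodP => /=.
rewrite FracField.equivfE /FracField.mulf /FracField.invf /=.
by rewrite !numden_Ratio ?oner_neq0 ?mulr1 ?mul1r // mulrC.
Qed.

Lemma inRXtoK p : inRX (toK p). Proof. by exists p. Qed.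

Lemma inRXD (x y : K) : inRX x -> inRX y -> inRX (x + y).
Proof. by move=> [p ->] [q ->]; exists (p + q); rewrite toKD. Qed.

Lemma inRXM (x y : K) : inRX x -> inRX y -> inRX (x * y).
Proof. by move=> [p ->] [q ->]; exists (p * q); rewrite toKM. Qed.

Lemma coef_embed P i : (embed P)`_i = toK P`_i.
Proof. by rewrite coef_map_id0 // toK0. Qed.

Lemma embedD P1 P2 : embed (P1 + P2) = embed P1 + embed P2.
Proof. by apply/polyP => i; rewrite coefD !coef_embed coefD toKD. Qed.

Lemma embedB P1 P2 : embed (P1 - P2) = embed P1 - embed P2.
Proof. by apply/polyP => i; rewrite coefB !coef_embed coefB toKB. Qed.

Lemma embedZ p P : embed (p *: P) = toK p *: embed P.
Proof. by apply/polyP => i; rewrite coefZ !coef_embed coefZ toKM. Qed.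

Lemma embed1 : embed (1 : {poly {poly R}}) = 1.
Proof. by apply/polyP => i; rewrite coef_embed !coef1; case: (i == 0%N); rewrite ?toK0 ?toK1. Qed.

Lemma embed_CXn p j : embed (p%:P * 'X^j) = toK p *: 'X^j.
Proof.
apply/polyP => i; rewrite coef_embed coefCM coefZ !coefXn.
by case: (i == j); rewrite ?mulr1 ?mulr0 ?toK0.
Qed.

Lemma size_embed P : size (embed P) = size P.
Proof. exact: size_map_inj_poly toK_inj toK0 P. Qed.

Lemma lead_coef_embed P : lead_coef (embed P) = toK (lead_coef P).
Proof. exact: lead_coef_map_inj toK_inj toK0 P. Qed.

Lemma embed_eq0 P : (embed P == 0) = (P == 0).
Proof. by rewrite -!size_poly_eq0 size_embed. Qed.

Lemma inRXop_embed P : inRXop (embed P).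
Proof. by move=> i; rewrite coef_embed; exact: inRXtoK. Qed.

Lemma inRXopP (Y : {poly K}) : inRXop Y -> exists P, embed P = Y.
Proof.
move=> YRX; have YRXb i : exists q, Y`_i == toK q by have [q ->] := YRX i; exists q.
exists (\poly_(i < size Y) xchoose (YRXb i)); apply/polyP => i; rewrite coef_embed coef_poly.
by case: ltnP => Yi; [exact/esym/eqP/(xchooseP (YRXb i)) | rewrite toK0 nth_default].
Qed.

End Embedding.

Definition RX_endo (R : idomainType) (phi : QRx R -> QRx R) : Prop :=
  [/\ {morph phi : f g / f + g}, {morph phi : f g / f * g},
      forall c : R, phi (cK c) = cK c & forall p : {poly R}, inRX (phi (toK p))].

Section RXEndo.
Variable R : idomainType.
Implicit Types (phi psi : QRx R -> QRx R).

Lemma RX_endo_build phi : {morph phi : f g / f + g} -> {morph phi : f g / f * g} ->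
  (forall c, phi (cK c) = cK c) -> inRX (phi (toK 'X)) -> RX_endo phi.
Proof.
move=> phiD phiM phiC phiX; split => // p; elim/poly_ind: p => [|p c IH].
  by rewrite toK0 addmorph0 //; exists 0; rewrite toK0.
by rewrite toKD toKM phiD phiM phiC; apply/inRXD/inRXtoK/inRXM.
Qed.

Lemma RX_endo_iter phi n : RX_endo phi -> RX_endo (iter n phi).
Proof.
move=> [phiD phiM phiC phiRX]; elim: n => [|n [iD iM iC iRX]] /=.
  by split => // p; exact: inRXtoK.
split=> [f g | f g | c | p] /=; rewrite ?iD ?iM ?iC ?phiD ?phiM ?phiC //.
by have [q ->] := iRX p.
Qed.

Lemma primitive_RX_endo phi psi (g g' : {poly R}) : RX_endo psi -> cancel phi psi ->
  phi (toK g) = toK g' -> primitive g -> primitive g'.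
Proof.
move=> [_ psiM psiC psiRX] phiK e pg c /dvdC_polyC [g'' eg'].
have [g3 e3] := psiRX g''.
have /toK_inj eg : toK g = toK (c%:P * g3) by rewrite -(phiK (toK g)) e eg' toKM psiM psiC e3 toKM.
by apply: pg => i; rewrite eg coefCM; exists g3`_i; rewrite mulrC.
Qed.

End RXEndo.

Section LeftIdeal.
Variables (R : idomainType) (sig del : QRx R -> QRx R) (S : {poly {poly R}} -> Prop).
Local Notation lideal := (lideal sig del S).

Lemma lideal_single A B P : S B -> embed P = omul sig del (embed A) (embed B) -> lideal P.
Proof. by move=> SB e; exists 1%N, (fun=> A), (fun=> B); rewrite big_ord1. Qed.

Lemma lidealD P1 P2 : lideal P1 -> lideal P2 -> lideal (P1 + P2).
Proof.
move=> [n1 [A1 [B1 [SB1 e1]]]] [n2 [A2 [B2 [SB2 e2]]]].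
pose A i := match split i with inl j => A1 j | inr j => A2 j end.
pose B i := match split i with inl j => B1 j | inr j => B2 j end.
exists (n1 + n2)%N, A, B; split; first by move=> i; rewrite /B; case: (split i).
rewrite embedD e1 e2 big_split_ord /=.
have sl (i : 'I_n1) : split (lshift n2 i) = inl i := unsplitK (inl i).
have sr (i : 'I_n2) : split (rshift n1 i) = inr i := unsplitK (inr i).
by congr (_ + _); apply: eq_bigr => i _; rewrite /A /B ?sl ?sr.
Qed.

Lemma lidealZ x P : lideal P -> lideal (x *: P).
Proof.
move=> [n [A [B [SB e]]]]; exists n, (fun i => x *: A i), B; split => //.
by rewrite embedZ e scaler_sumr; apply: eq_bigr => i _; rewrite embedZ omulZ.
Qed.

End LeftIdeal.

(** * The contraction ideal *)

Section OreData.
Variables (R : idomainType) (gam tau : R) (d : {poly R}) (sig sigi del : QRx R -> QRx R).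
Hypothesis hore : ore_data gam tau d sig sigi del.
Local Notation K := (QRx R).
Local Notation D := (dshift sig del).
Local Notation om := (omul sig del).

Let gamU : gam \is a GRing.unit. Proof. by case: hore. Qed.
Let sigD : {morph sig : f g / f + g}. Proof. by case: hore => _ []. Qed.
Let sigM : {morph sig : f g / f * g}. Proof. by case: hore => _ []. Qed.
Let sig1 : sig 1 = 1. Proof. by case: hore => _ []. Qed.
Let sigK : cancel sig sigi. Proof. by case: hore => _ []. Qed.
Let sigiK : cancel sigi sig. Proof. by case: hore => _ []. Qed.
Let sigC c : sig (cK c) = cK c. Proof. by case: hore. Qed.
Let sigX : sig (toK 'X) = toK (gam *: 'X + tau%:P). Proof. by case: hore. Qed.
Let delD : {morph del : f g / f + g}. Proof. by case: hore => _ _ _ _ []. Qed.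
Let delC c f : del (cK c * f) = cK c * del f. Proof. by case: hore => _ _ _ _ []. Qed.
Let delM f g : del (f * g) = sig f * del g + del f * g. Proof. by case: hore => _ _ _ _ []. Qed.
Let delX : del (toK 'X) = toK d. Proof. by case: hore => _ _ _ _ []. Qed.

Lemma ore_data_maps : ore_maps sig del.
Proof. by split => //; exact: can_inj sigK. Qed.
Let ore := ore_data_maps.

Lemma sig_RX_endo : RX_endo sig.
Proof. by apply: RX_endo_build => //; rewrite sigX; exact: inRXtoK. Qed.

Lemma sigi_RX_endo : RX_endo sigi.
Proof.
have sigiD : {morph sigi : f g / f + g}.
  by move=> f g; apply: (can_inj sigK); rewrite sigD !sigiK.
apply: RX_endo_build => //.
- by move=> f g; apply: (can_inj sigK); rewrite sigM !sigiK.
- by move=> c; apply: (can_inj sigK); rewrite sigiK sigC.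
exists (gam^-1 *: ('X - tau%:P)); apply: (can_inj sigK); rewrite sigiK.
rewrite -mul_polyC toKM toKB sigM sigD addmorphN // sigC sigX [sig (toK _)]sigC.
by rewrite -mul_polyC toKD toKM addrK mulrA -toKM -polyCM mulVr ?gamU // toK1 mul1r.
Qed.

Lemma del_RX p : inRX (del (toK p)).
Proof.
have delC0 c : del (cK c) = 0 by rewrite -[cK c]mulr1 delC (del1 ore) mulr0.
elim/poly_ind: p => [|p c IH]; first by rewrite toK0 addmorph0 //; exists 0; rewrite toK0.
rewrite toKD toKM delD delM delX delC0 addr0.
have [_ _ _ sigRX] := sig_RX_endo.
by apply: inRXD; [exact: inRXM (sigRX p) (inRXtoK d) | exact: inRXM IH (inRXtoK _)].
Qed.

Lemma inRXop_dshift Y : inRXop Y -> inRXop (D Y).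
Proof.
move=> YRX j; rewrite (coef_dshift ore); apply: inRXD; last by have [q ->] := YRX j; exact: del_RX.
case: (j == 0%N); first by exists 0; rewrite toK0.
by have [q ->] := YRX j.-1; have [_ _ _] := sig_RX_endo; apply.
Qed.

Lemma inRXop_omul A B : inRXop (om (embed A) (embed B)).
Proof.
have iterRX i : inRXop (iter i D (embed B)).
  by elim: i => [|i IH]; [exact: inRXop_embed | exact: inRXop_dshift].
rewrite (omulE sig del (embed B) (leqnn _)) => j; rewrite coef_sum.
elim/big_rec: _ => [|i x _ xRX]; first by exists 0; rewrite toK0.
by apply: inRXD xRX; rewrite coefZ coef_embed; apply: inRXM (inRXtoK _) (iterRX i j).
Qed.

Lemma iter_sigK n : cancel (iter n sig) (iter n sigi).
Proof. by elim: n => [//|n IH] x; rewrite [iter n.+1 sig x]iterS iterSr sigK IH. Qed.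

Lemma iter_sigiK n : cancel (iter n sigi) (iter n sig).
Proof. by elim: n => [//|n IH] x; rewrite [iter n.+1 sigi x]iterS iterSr sigiK IH. Qed.

Lemma sig_pow_RX_endo r k : RX_endo (sig_pow sig sigi r k).
Proof.
by rewrite /sig_pow; case: (k <= r)%N; apply: RX_endo_iter; [exact: sig_RX_endo | exact: sigi_RX_endo].
Qed.

Lemma sig_pow_inv r k : exists2 psi, RX_endo psi & cancel (sig_pow sig sigi r k) psi.
Proof.
rewrite /sig_pow; case: (k <= r)%N.
- by exists (iter (r - k) sigi); [exact/RX_endo_iter/sigi_RX_endo | exact: iter_sigK].
- by exists (iter (k - r) sig); [exact/RX_endo_iter/sig_RX_endo | exact: iter_sigiK].
Qed.

Lemma iter_sig_pow r k n x : (k <= n + r)%N ->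
  iter n sig (sig_pow sig sigi r k x) = iter (n + r - k) sig x.
Proof.
rewrite /sig_pow; case: (leqP k r) => kr nrk; first by rewrite -iterD; congr iter; lia.
by rewrite {1}(_ : n = (n + r - k) + (k - r))%N ?iterD ?iter_sigiK //; lia.
Qed.

Lemma cont_size_lead_coef Q P L : Q != 0 -> L != 0 -> embed P = om Q (embed L) ->
  size P = (size Q + size L).-1 /\
  toK (lead_coef P) = lead_coef Q * iter (size Q).-1 sig (toK (lead_coef L)).
Proof.
move=> Q0 L0 e; have L0' : embed L != 0 by rewrite embed_eq0.
have [sQL lQL] := size_omul ore Q0 L0'.
by rewrite -size_embed e sQL size_embed -lead_coef_embed e lQL lead_coef_embed.
Qed.

Lemma lideal_Mk_cont L k P : lideal sig del (Mk sig del L k) P -> cont sig del L P.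
Proof.
move=> [n [A [B [MB eP]]]]; rewrite /cont eP.
elim/big_rec: _ => [|i _ _ [X ->]]; first by exists 0; rewrite omul0.
have [[Q eQ] _] := MB i; exists (om (embed (A i)) Q + X).
by rewrite eQ (omulA ore) omulD.
Qed.

Lemma colon_lideal_Mk_cont L k a P : a != 0 ->
  colon (lideal sig del (Mk sig del L k)) a P -> cont sig del L P.
Proof.
move=> a0 [i /lideal_Mk_cont [X eX]]; rewrite embedZ in eX.
have ai0 : toK (a ^+ i)%:P != 0 by rewrite cK_eq0 expf_neq0.
by exists ((toK (a ^+ i)%:P)^-1 *: X); rewrite omulZ -eX scalerA mulVf ?ai0 // scale1r.
Qed.

End OreData.

Section Desingularized.
Variable R : idomainType.
Hypothesis R_PID : PID R.
Variables (gam tau : R) (d : {poly R}) (sig sigi del : QRx R -> QRx R).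
Hypothesis hore : ore_data gam tau d sig sigi del.
Local Notation om := (omul sig del).
Local Notation removable := (removable sig sigi del).

Let ore := ore_data_maps hore.

Variables (L : {poly {poly R}}) (c : R) (m : nat) (p : 'I_m -> {poly R}) (e ks : 'I_m -> nat).
Hypothesis L0 : L != 0.
Hypothesis lcL : lead_coef L = c%:P * \prod_(i < m) p i ^+ e i.
Hypothesis p_irr : forall i, (1 < size (p i))%N /\ irredRX (p i).
Hypothesis p_coprime : forall i j, i != j -> coprimeRX (p i) (p j).
Hypothesis p_nonremovable : forall i dd, (ks i < dd)%N -> ~ removable L (p i ^+ dd).

Let p_size i : (1 < size (p i))%N. Proof. by case: (p_irr i). Qed.
Let p_prime i : primeRX (p i). Proof. by case: (p_irr i); exact: irred_prime. Qed.
Let p_neq0 i : p i != 0. Proof. by rewrite -size_poly_gt0 ltnW. Qed.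
Arguments p_size : clear implicits.
Arguments p_prime : clear implicits.
Arguments p_neq0 : clear implicits.

Lemma nonremovable_order_bound Q i N D dd : Q != 0 -> inRXop (om Q (embed L)) ->
  D != 0 -> ~ dvdRX (p i) N ->
  iter (size Q).-1 sigi (lead_coef (om Q (embed L)))
    = toK N / (toK D * toK (p i ^+ dd)) * toK (lead_coef L) ->
  (dd <= ks i)%N.
Proof.
move=> Q0 QL_RX D0 pNN lcQL; rewrite leqNgt; apply/negP => /p_nonremovable; apply.
exists (size Q).-1, Q; split; first by rewrite prednK // size_poly_gt0.
by exists N, D; split => //; exact: coprime_prime_pow.
Qed.

Lemma nonremovable_pow_dvd Q F N D i : Q != 0 -> inRXop (om Q (embed L)) -> D != 0 ->
  iter (size Q).-1 sigi (lead_coef (om Q (embed L))) = toK N / toK D * toK (lead_coef L) ->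
  F * D = N * lead_coef L -> dvdRX (p i ^+ (e i - ks i)) F.
Proof.
move=> Q0 QL_RX D0 lcQL eF; have [N0 | N0] := eqVneq N 0.
  exists 0; apply/eqP; move: eF; rewrite N0 !mul0r => /eqP.
  by rewrite mulf_eq0 (negPf D0) orbF.
have [be [N' [eN pNN']]] := factor_max_pow (p_size i) N0.
have [al [D' [eD pND']]] := factor_max_pow (p_size i) D0.
have D'0 : D' != 0 by apply: contraNneq D0 => D'0; rewrite eD D'0 mulr0.
apply: (@prime_pow_dvd_cancel _ _ (p_prime i) (p_size i) al be (e i) (ks i) F D' N'
  (c%:P * \prod_(j < m | j != i) p j ^+ e j) pND'); last first.
  by rewrite -eD eF eN lcL (bigD1 i) //=; ring.
have [albe | beal] := leqP al be; first by rewrite (eqP (_ : al - be == 0)%N) ?subn_eq0.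
(* Otherwise Q removes p_i^(al - be) from L. *)
apply: (nonremovable_order_bound Q0 QL_RX D'0 pNN'); set dd := (al - be)%N.
have pi0 : toK (p i) != 0 by rewrite toK_eq0.
have D'K0 : toK D' != 0 by rewrite toK_eq0.
rewrite lcQL eN eD (_ : al = be + dd)%N; last by rewrite subnKC // ltnW.
rewrite !toKM !toKXn exprD -[_ * _ * toK D']mulrA invfM mulrACA.
by rewrite (divff (expf_neq0 _ pi0)) mul1r (mulrC (_ ^+ dd)).
Qed.

Lemma nonremovable_prod_dvd Q P : Q != 0 -> embed P = om Q (embed L) ->
  exists2 F, iter (size Q).-1 sigi (toK (lead_coef P)) = toK F &
             dvdRX (\prod_(i < m) p i ^+ (e i - ks i)) F.
Proof.
move=> Q0 eP; have [_ lcP] := cont_size_lead_coef hore Q0 L0 eP.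
set n := (size Q).-1; have [_ sigiM _ sigiRX] := RX_endo_iter n (sigi_RX_endo hore).
have [F eF] := sigiRX (lead_coef P); exists F => //.
have [N [D [D0 eND]]] := toK_fracE (iter n sigi (lead_coef Q)).
have eFQ : toK F = toK N / toK D * toK (lead_coef L).
  by rewrite -eF lcP sigiM (iter_sigK hore) eND.
have QL_RX : inRXop (om Q (embed L)) by rewrite -eP; exact: inRXop_embed.
apply: (dvd_prod_coprime_pows p_prime p_size p_coprime) => i.
apply: (@nonremovable_pow_dvd Q F N D i Q0 QL_RX D0); first by rewrite -eP lead_coef_embed eF.
have DK0 : toK D != 0 by rewrite toK_eq0.
by apply: toK_inj; rewrite !toKM eFQ mulrAC divfK.
Qed.

Variables (T : {poly {poly R}}) (a a0 b : R) (g : {poly R}).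
Hypothesis lcT : lead_coef T = a%:P * g.
Hypothesis g_primitive : primitive g.
Hypothesis T0 : T != 0.
Hypothesis b0 : b != 0.
Hypothesis lcT_sig : sig_pow sig sigi (size L).-1 (size T).-1 (toK (lead_coef T))
  = cK a0 / (cK b * toK (\prod_(i < m) p i ^+ ks i)) * toK (lead_coef L).

Lemma lead_coefT_neq0 : a != 0 /\ g != 0.
Proof. by move: T0; rewrite -lead_coef_eq0 lcT mulf_eq0 polyC_eq0 negb_or => /andP. Qed.

Lemma desing_primitive_dvd Gr F :
  sig_pow sig sigi (size L).-1 (size T).-1 (toK g) = toK Gr ->
  dvdRX (\prod_(i < m) p i ^+ (e i - ks i)) F -> dvdRX Gr F.
Proof.
move=> eGr [h eF]; have [a0' g0] := lead_coefT_neq0.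
have [psi psi_endo sigpK] := sig_pow_inv hore (size L).-1 (size T).-1.
have [_ sigpM sigpC _] := sig_pow_RX_endo hore (size L).-1 (size T).-1.
have Gr_prim := primitive_RX_endo psi_endo sigpK eGr g_primitive.
have Gr0 : Gr != 0.
  apply: contraNneq g0 => Gr0; apply/eqP/toK_inj.
  by rewrite -(sigpK (toK g)) eGr Gr0 !toK0 addmorph0 //; case: psi_endo.
have pows0 (E : 'I_m -> nat) : \prod_(i < m) p i ^+ E i != 0.
  by apply/prodf_neq0 => i _; exact: expf_neq0.
have rel : (a * b)%:P * Gr * \prod_(i < m) p i ^+ ks i = (a0 * c)%:P * \prod_(i < m) p i ^+ e i.
  have bK0 : cK b != 0 by rewrite cK_eq0.
  have ksK0 : toK (\prod_(i < m) p i ^+ ks i) != 0 by rewrite toK_eq0.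
  move: lcT_sig; rewrite lcT toKM sigpM sigpC eGr lcL => lcT_sig'.
  apply: toK_inj; rewrite !toKM !polyCM !toKM.
  transitivity ((cK a * toK Gr) * (cK b * toK (\prod_(i < m) p i ^+ ks i))); first by rewrite /cK; ring.
  by rewrite lcT_sig' toKM mulrAC (divfK (mulf_neq0 bK0 ksK0)) mulrA.
have := prod_pow_cancel p_neq0 rel; rewrite -mulrA => rel'.
have ac0 : a0 * c != 0.
  have ab0 : (a * b)%:P != 0 by rewrite polyC_eq0 mulf_neq0.
  apply: contraTneq (mulf_neq0 ab0 (mulf_neq0 Gr0 (pows0 (fun i => ks i - e i)%N))) => ac0.
  by rewrite rel' ac0 polyC0 mul0r eqxx.
apply: (primitive_dvdRX R_PID Gr_prim ac0 (h := h * ((a * b)%:P * \prod_(i < m) p i ^+ (ks i - e i)))).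
by rewrite eF mulrCA -rel' -mulrA; ring.
Qed.

Lemma cont_lead_coef_factor Q P : Q != 0 -> embed P = om Q (embed L) -> (size T <= size P)%N ->
  exists H g', iter (size P - size T) sig (toK g) = toK g' /\ lead_coef P = H * g'.
Proof.
move=> Q0 eP TP; have [sP _] := cont_size_lead_coef hore Q0 L0 eP.
have [F eF Fdvd] := nonremovable_prod_dvd Q0 eP.
have [_ _ _ sigpRX] := sig_pow_RX_endo hore (size L).-1 (size T).-1.
have [Gr eGr] := sigpRX g; have [H eH] := desing_primitive_dvd eGr Fdvd.
set n := (size Q).-1; have [_ sigM _ sigRX] := RX_endo_iter n (sig_RX_endo hore).
have [_ _ _ sigjRX] := RX_endo_iter (size P - size T) (sig_RX_endo hore).
have [H' eH'] := sigRX H; have [g' eg'] := sigjRX g.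
exists H', g'; split => //; apply: toK_inj; rewrite toKM -eH' -eg'.
have Q_gt0 : (0 < size Q)%N by rewrite size_poly_gt0.
have T_gt0 : (0 < size T)%N by rewrite size_poly_gt0.
have L_gt0 : (0 < size L)%N by rewrite size_poly_gt0.
have -> : (size P - size T = n + (size L).-1 - (size T).-1)%N by rewrite sP /n; lia.
rewrite -(iter_sig_pow hore); last by rewrite /n; lia.
by rewrite eGr -sigM -toKM -eH -eF (iter_sigiK hore).
Qed.

Variable k : nat.
Hypothesis T_Mk : Mk sig del L k T.

Lemma cont_reduce_order P : cont sig del L P -> (size T <= size P)%N ->
  exists2 W, lideal sig del (Mk sig del L k) W &
    cont sig del L (a%:P *: P - W) /\ (size (a%:P *: P - W)%R < size P)%N.
Proof.
move=> [Q eP] TP; have [[QT eT] _] := T_Mk.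
have P0 : P != 0 by rewrite -size_poly_gt0 (leq_trans _ TP) // size_poly_gt0.
have Q0 : Q != 0 by apply: contraNneq P0 => Q0; rewrite -embed_eq0 eP Q0 omul0.
have [H [g' [eg' lcP]]] := cont_lead_coef_factor Q0 eP TP.
set j := (size P - size T)%N.
have [W eW] := inRXopP (inRXop_omul hore (H%:P * 'X^j) T).
exists W; first exact: lideal_single T_Mk eW.
have eaPW : embed (a%:P *: P - W) = cK a *: embed P - toK H *: om 'X^j (embed T).
  by rewrite embedB embedZ eW embed_CXn omulZ.
split; first by exists (cK a *: Q - toK H *: om 'X^j QT); rewrite eaPW eP eT omulB !omulZ (omulA ore).
have [sY lcY] : size (om 'X^j (embed T)) = size P /\ lead_coef (om 'X^j (embed T)) = cK a * toK g'.
  have [] := size_omul ore (monic_neq0 (monicXn _ j)) (_ : embed T != 0); first by rewrite embed_eq0.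
  rewrite size_polyXn lead_coefXn mul1r size_embed lead_coef_embed lcT /= => -> ->; split; first exact: subnK.
  by have [_ sM sC _] := RX_endo_iter j (sig_RX_endo hore); rewrite toKM sM sC eg'.
rewrite -(size_embed (a%:P *: P - W)) eaPW.
apply: (@leq_ltn_trans (size P).-1); last by rewrite ltn_predL size_poly_gt0.
apply/leq_sizeP => i Pi; rewrite coefB !coefZ coef_embed.
have [-> | ne] := eqVneq i (size P).-1.
  by rewrite -lead_coefE -sY -lead_coefE lcY lcP toKM; ring.
have P_gt0 : (0 < size P)%N by rewrite size_poly_gt0.
have Pi' : (size P <= i)%N by rewrite -(prednK P_gt0) ltn_neqAle eq_sym ne.
by rewrite !nth_default ?sY // toK0 !mulr0 subrr.
Qed.

Lemma cont_colon_lideal_Mk P : cont sig del L P -> colon (lideal sig del (Mk sig del L k)) a P.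
Proof.
have Mk_colon P' : Mk sig del L k P' -> colon (lideal sig del (Mk sig del L k)) a P'.
  move=> MP'; exists 0%N; rewrite expr0 scale1r.
  by apply: (lideal_single (A := 1) (B := P')) => //; rewrite embed1 omul1.
move: {2}(size P) (leqnn (size P)) => s; elim: s P => [|s IH] P sP cP.
  by apply: Mk_colon; split => //; exact: leq_trans sP _.
have [Pk | Pk] := leqP (size P) k.+1; first exact: Mk_colon.
have [W IW [cP' sP']] := cont_reduce_order cP (leq_trans T_Mk.2 (ltnW Pk)).
have [i Ii] := IH _ (leq_trans sP' sP) cP'.
exists i.+1; rewrite exprSr polyCM -scalerA -[a%:P *: P](subrK W) scalerDr.
exact: lidealD Ii (lidealZ _ IW).
Qed.

End Desingularized.

Unset Implicit Arguments.

Theorem mainTheorem1 (R : idomainType) (hPID : PID R)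
  (gam tau : R) (d : {poly R}) (sig sigi del : QRx R -> QRx R)
  (hore : ore_data gam tau d sig sigi del)
  (L T : {poly {poly R}}) (hL : (1 < size L)%N)
  (hT : desingularized sig sigi del L T)
  (a : R) (g : {poly R}) (hlc : lead_coef T = a%:P * g) (hg : primitive g)
  (k : nat) (hk : Mk sig del L k T) :
  forall P : {poly {poly R}},
    cont sig del L P <-> colon (lideal sig del (Mk sig del L k)) a P.
Proof.
have [T0 _ [c [m [p [e [lcL p_irr _ p_coprime [a0 [b [ks [b0 lcT_sig p_nonrem]]]]]]]]]] := hT.
have L0 : L != 0 by rewrite -size_poly_gt0 ltnW.
have [a_neq0 _] := lead_coefT_neq0 hlc T0.
move=> P; split; last by move=> hc; apply: (colon_lideal_Mk_cont hore a_neq0 hc).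
exact: (cont_colon_lideal_Mk hPID hore L0 lcL p_irr p_coprime p_nonrem hlc hg T0 b0 lcT_sig hk).
Qed.
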